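(* Let $K$ be a $p$-adic number field with absolute value $|\cdot|$ and ring of integers $\mathcal{O}_K$, and let $P\in K[X]\setminus\mathcal{O}_K[X]$ be a polynomial having $n\ge1$ roots of absolute value $1$ in $\mathbb{C}_p$, counted with multiplicity. Then $$\#\{\xi\in\mu_\infty: P(\xi)\in\mu_\infty\}\le 2^8\,[K:K^{nr(\mathbb{Q}_p)}]^8\,p\,n^9.$$
   Context: $\mathbb{C}_p$ is the completion of an algebraic closure of $\mathbb{Q}_p$ containing $K$; $\mu_\infty$ is the group of roots of unity in $\mathbb{C}_p$. $K^{nr(\mathbb{Q}_p)}$ denotes the maximal unramified subextension of $K/\mathbb{Q}_p$, so $[K:K^{nr(\mathbb{Q}_p)}]$ is the ramification index of $K/\mathbb{Q}_p$. *)

From mathcomp Require Import all_boot all_order all_algebra.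
From mathcomp Require Import reals.
Set Implicit Arguments. Unset Strict Implicit. Unset Printing Implicit Defensive.
Import Order.TTheory GRing.Theory Num.Theory.
Local Open Scope ring_scope.

Section CpDefs.
Variables (R : realType) (L : fieldType) (abs : L -> R).

Definition is_nonarch_abs : Prop :=
  (forall x, 0 <= abs x) /\ (forall x, abs x = 0 <-> x = 0) /\
  (forall x y, abs (x * y) = abs x * abs y) /\
  (forall x y, abs (x + y) <= Num.max (abs x) (abs y)).

Definition abs_complete : Prop :=
  forall u : nat -> L,
    (forall eps : R, 0 < eps -> exists N, forall m k, (N <= m)%N -> (N <= k)%N ->
        abs (u m - u k) < eps) ->
    exists l, forall eps : R, 0 < eps -> exists N, forall k, (N <= k)%N ->
        abs (u k - l) < eps.

Definition algebraic_over_Q (x : L) : Prop :=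
  exists q : {poly rat}, q != 0 /\ root (map_poly ratr q) x.

(* (L, abs) is (an isometric copy of) C_p: an algebraically closed (assumed by
   the type), complete nonarchimedean valued field of characteristic 0, with
   |p| = 1/p, in which the algebraic numbers are dense (so L is the completion
   of an algebraic closure of Q_p). *)
Definition is_Cp (p : nat) : Prop :=
  prime p /\ is_nonarch_abs /\ (forall m : nat, m.+1%:R != 0 :> L) /\
  abs p%:R = (p%:R)^-1 /\ abs_complete /\
  (forall x (eps : R), 0 < eps -> exists y, algebraic_over_Q y /\ abs (x - y) < eps).

Definition in_Qp (x : L) : Prop :=
  forall eps : R, 0 < eps -> exists q : rat, abs (x - ratr q) < eps.

Definition is_subfield (K : L -> Prop) : Prop :=
  K 0 /\ K 1 /\ (forall x y, K x -> K y -> K (x - y)) /\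
  (forall x y, K x -> K y -> K (x * y)) /\ (forall x, K x -> x != 0 -> K x^-1).

Definition finite_over (F K : L -> Prop) : Prop :=
  exists d (b : 'I_d -> L),
    (forall i, K (b i)) /\
    (forall c : 'I_d -> L, (forall i, F (c i)) -> \sum_i c i * b i = 0 ->
        forall i, c i = 0) /\
    (forall x, K x -> exists c : 'I_d -> L, (forall i, F (c i)) /\ x = \sum_i c i * b i).

Definition p_adic_field (K : L -> Prop) : Prop :=
  is_subfield K /\ (forall x, in_Qp x -> K x) /\ finite_over in_Qp K.

Definition ramification_index (p : nat) (K : L -> Prop) (e : nat) : Prop :=
  (0 < e)%N /\
  exists pi, K pi /\ pi != 0 /\ abs pi ^+ e = abs p%:R /\
    (forall x, K x -> x != 0 -> exists k : int, abs x = abs pi ^ k).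

Definition is_root_of_unity (x : L) : Prop := exists k, (0 < k)%N /\ x ^+ k = 1.

Definition nroots_abs1 (P : {poly L}) (n : nat) : Prop :=
  exists (c : L) (s : seq L),
    P = c *: \prod_(z <- s) ('X - z%:P) /\ count (fun z => abs z == 1) s = n.

End CpDefs.

(** A root of unity ξ with P(ξ) a root of unity has |P(ξ)| = 1, while some
    coefficient of P has absolute value at least |π|^-1 for a uniformizer π
    of K.  Comparing the two through a factorisation P = c ∏ (X - z) gives
    ∏_{|z| = 1} |ξ - z| <= |π|, so ξ lies in one of the n discs
    |ξ - z|^n <= |π| around the unit roots z of P.  Two roots of unity in the
    same disc have a quotient ζ with |ζ - 1|^(n e) <= |p|; such a ζ has order
    p^w with p^w <= w n e + 1, because |1 - η|^(N - 1) >= |N| for a primitive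
    N-th root of unity η.  Hence each disc contains at most 4 (n e)^2 + 2 of
    the ξ, and there are n discs. *)

From mathcomp Require Import all_boot all_order all_algebra.
From mathcomp Require Import reals.
From mathcomp Require Import zify.
Set Implicit Arguments. Unset Strict Implicit. Unset Printing Implicit Defensive.
Import Order.TTheory GRing.Theory Num.Theory.

Lemma sq_le_2expn w : (w * w <= 2 * 2 ^ w)%N.
Proof.
elim: w => [//|w IH].
have [w3|w3] := leqP 3 w; first by rewrite expnS; nia.
by case: w w3 IH => [|[|[|]]].
Qed.

Lemma expn_le_linear_bound p w m :
  (1 < p)%N -> (p ^ w <= w * m + 1)%N -> (p ^ w <= 4 * (m * m) + 2)%N.
Proof.
move=> p_gt1 hw.
have h2w : (2 ^ w <= p ^ w)%N by case: w hw => [//|w] _; rewrite leq_exp2r.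
have := sq_le_2expn w.
have : (0 < p ^ w)%N by rewrite expn_gt0; lia.
set x := (p ^ w)%N in hw h2w *; nia.
Qed.

Lemma size_le_sum_count (T : eqType) (U : Type) (Q : T -> U -> bool)
    (s : seq T) (r : seq U) :
  (forall x, x \in s -> has (Q x) r) ->
  (size s <= \sum_(y <- r) count (Q^~ y) s)%N.
Proof.
elim: s => [//|x s IH] hs /=.
rewrite big_split /= -add1n leq_add //; last first.
  by apply: IH => y ys; rewrite hs // inE ys orbT.
have : (0 < count (Q x) r)%N by rewrite -has_count hs ?mem_head.
rewrite -sum1_count big_mkcond /=; move/leq_trans; apply.
by apply: leq_sum => y _; case: (Q x y).
Qed.

Lemma size_le_cover (T : eqType) (U : Type) (Q : T -> U -> bool)
    (s : seq T) (r : seq U) (B : nat) :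
  (forall x, x \in s -> has (Q x) r) ->
  (forall y, (count (Q^~ y) s <= B)%N) -> (size s <= size r * B)%N.
Proof.
move=> cover hB; apply: leq_trans (size_le_sum_count cover) _.
rewrite mulnC -iter_addn_0 -count_predT -big_const_seq.
by apply: leq_sum => y _.
Qed.

Lemma final_bound n e p : (0 < n)%N -> (0 < e)%N -> (1 < p)%N ->
  (n * (4 * ((n * e) * (n * e)) + 2) <= 2 ^ 8 * e ^ 8 * p * n ^ 9)%N.
Proof.
move=> n_gt0 e_gt0 p_gt1.
have h1 : (n * (4 * ((n * e) * (n * e)) + 2) <= 6 * (e ^ 2 * n ^ 3))%N.
  have -> : (e ^ 2 * n ^ 3 = n * ((n * e) * (n * e)))%N by rewrite !expnS !expn0; lia.
  have : (0 < (n * e) * (n * e))%N by rewrite !muln_gt0 n_gt0 e_gt0.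
  set y := ((n * e) * (n * e))%N; nia.
apply: leq_trans h1 _.
have h2 : (e ^ 2 * n ^ 3 <= e ^ 8 * n ^ 9)%N by apply: leq_mul; rewrite leq_pexp2l.
have : (0 < e ^ 8 * n ^ 9)%N by rewrite muln_gt0 !expn_gt0 e_gt0 n_gt0.
have -> : (2 ^ 8 * e ^ 8 * p * n ^ 9 = 256 * p * (e ^ 8 * n ^ 9))%N by lia.
set X := (e ^ 8 * n ^ 9)%N in h2 *; nia.
Qed.

Local Open Scope ring_scope.

Lemma prod_one_sub_prim_root (L : fieldType) (z : L) (N : nat) :
  N.-primitive_root z -> \prod_(1 <= i < N) (1 - z ^+ i) = N%:R.
Proof.
move=> pz; have N_gt0 := prim_order_gt0 pz.
have := factor_Xn_sub_1 pz; rewrite big_ltn // expr0.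
have -> : ('X^N - 1 : {poly L}) = ('X - 1) * \sum_(i < N) 'X^i.
  rewrite -[X in _ - X](expr1n _ N) subrXX; congr (_ * _).
  rewrite (reindex_inj rev_ord_inj) /=; apply: eq_bigr => i _.
  by rewrite expr1n mulr1; congr (_ ^+ _); case: i => i hi /=; lia.
have nz : ('X - 1 : {poly L}) != 0 by rewrite -polyC1 polyXsubC_eq0.
rewrite polyC1 => /(mulfI nz)/(congr1 (horner^~ 1)).
rewrite horner_prod horner_sum; under eq_bigr do rewrite hornerXsubC.
by move=> ->; under eq_bigr do rewrite hornerXn expr1n; rewrite sumr_const card_ord.
Qed.

Lemma exists_pow_size_le_prod (R : realDomainType) (T : eqType)
    (s : seq T) (f : T -> R) :
  (forall x, 0 <= f x) -> (0 < size s)%N ->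
  exists2 x, x \in s & f x ^+ size s <= \prod_(y <- s) f y.
Proof.
move=> f_ge0; elim: s => [//|a [|b s] IH] _.
  by exists a; rewrite ?mem_head // big_cons big_nil expr1 mulr1.
have [x xs hx] := IH isT; rewrite big_cons.
have [le|lt] := leP (f a) (f x).
  exists a; first exact: mem_head.
  by rewrite exprS ler_wpM2l //; apply: le_trans hx; rewrite lerXn2r ?nnegrE.
exists x; first by rewrite inE xs orbT.
by rewrite exprS ler_pM ?f_ge0 ?exprn_ge0 // ltW.
Qed.

Lemma unity_div (L : fieldType) (x y : L) :
  is_root_of_unity x -> is_root_of_unity y -> is_root_of_unity (x / y).
Proof.
case=> k [k_gt0 xk] [l [l_gt0 yl]]; exists (k * l)%N.
split; first by rewrite muln_gt0 k_gt0.
by rewrite exprMn exprVn exprM xk mulnC exprM yl !expr1n invr1 mulr1.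
Qed.

Section NonarchimedeanAbs.
Variables (R : realType) (L : fieldType) (abs : L -> R).
Hypothesis habs : is_nonarch_abs abs.

Lemma absv_ge0 x : 0 <= abs x.
Proof. by case: habs. Qed.

Lemma absv_eq0 x : (abs x == 0) = (x == 0).
Proof. by case: habs => _ [h _]; apply/eqP/eqP; apply h. Qed.

Lemma absv0 : abs 0 = 0.
Proof. by apply/eqP; rewrite absv_eq0. Qed.

Lemma absvM x y : abs (x * y) = abs x * abs y.
Proof. by case: habs => _ [_ []]. Qed.

Lemma absvD_max x y : abs (x + y) <= Num.max (abs x) (abs y).
Proof. by case: habs => _ [_ []]. Qed.

Lemma absv1 : abs 1 = 1.
Proof.
have nz : abs 1 != 0 by rewrite absv_eq0 oner_eq0.
by apply: (mulfI nz); rewrite mulr1 -absvM mulr1.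
Qed.

Lemma absvN x : abs (- x) = abs x.
Proof.
have absN1 : abs (-1) = 1.
  apply/eqP; rewrite -(pexpr_eq1 (n := 2)) ?absv_ge0 //.
  by rewrite expr2 -absvM mulrNN mulr1 absv1.
by rewrite -mulN1r absvM absN1 mul1r.
Qed.

Lemma absvB_max x y : abs (x - y) <= Num.max (abs x) (abs y).
Proof. by rewrite -(absvN y) absvD_max. Qed.

Lemma absvBC x y : abs (x - y) = abs (y - x).
Proof. by rewrite -absvN opprB. Qed.

Lemma absvX x k : abs (x ^+ k) = abs x ^+ k.
Proof. by elim: k => [|k IH]; rewrite ?absv1 // !exprS absvM IH. Qed.

Lemma absvV x : abs x^-1 = (abs x)^-1.
Proof.
have [->|x0] := eqVneq x 0; first by rewrite invr0 absv0 invr0.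
have ax0 : abs x != 0 by rewrite absv_eq0.
by apply: (mulfI ax0); rewrite -absvM !mulfV // absv1.
Qed.

Lemma absv_natr_le1 k : abs k%:R <= 1.
Proof.
elim: k => [|k IH]; first by rewrite absv0.
by rewrite -addn1 natrD; apply: le_trans (absvD_max _ _) _; rewrite ge_max IH absv1 lexx.
Qed.

Lemma absv_prod (I : Type) (r : seq I) (P : pred I) (F : I -> L) :
  abs (\prod_(i <- r | P i) F i) = \prod_(i <- r | P i) abs (F i).
Proof. exact: (big_morph abs absvM absv1). Qed.

Lemma absv_sum_le (I : Type) (r : seq I) (P : pred I) (F : I -> L) (c : R) :
  0 <= c -> (forall i, P i -> abs (F i) <= c) -> abs (\sum_(i <- r | P i) F i) <= c.
Proof.
move=> c0 hF; apply: (big_ind (fun x => abs x <= c)) => //; first by rewrite absv0.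
by move=> x y hx hy; apply: le_trans (absvD_max _ _) _; rewrite ge_max hx hy.
Qed.

Lemma absvB_eq_max x y : abs x != abs y -> abs (x - y) = Num.max (abs x) (abs y).
Proof.
suff gt_abs u v : abs v < abs u -> abs (u - v) = abs u.
  case: (ltgtP (abs x) (abs y)) => // h _.
    by rewrite absvBC gt_abs // max_r // ltW.
  by rewrite gt_abs // max_l // ltW.
move=> lt; apply/eqP; rewrite eq_le; apply/andP; split.
  by apply: le_trans (absvB_max _ _) _; rewrite ge_max lexx ltW.
have : abs u <= Num.max (abs (u - v)) (abs v) by rewrite -{1}(subrK v u) absvD_max.
by rewrite le_max => /orP[//|h]; rewrite ltNge h in lt.
Qed.

Lemma absv_unity x : is_root_of_unity x -> abs x = 1.
Proof.
case=> k [k_gt0 xk]; apply/eqP; rewrite -(pexpr_eq1 k_gt0 (absv_ge0 _)).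
by rewrite -absvX xk absv1.
Qed.

Lemma absv_1_subX_le z i : abs z = 1 -> abs (1 - z ^+ i) <= abs (1 - z).
Proof.
move=> z1; rewrite -[X in X - _](expr1n _ i) subrXX absvM ler_piMr ?absv_ge0 //.
by apply: absv_sum_le => // j _; rewrite expr1n mul1r absvX z1 expr1n.
Qed.

Lemma absv_natr_prim_order z N :
  N.-primitive_root z -> abs z = 1 -> abs N%:R <= abs (1 - z) ^+ N.-1.
Proof.
move=> pz z1; rewrite -(prod_one_sub_prim_root pz) absv_prod.
rewrite -subn1 -prodr_const_nat; apply: ler_prod => i _.
by rewrite absv_ge0 absv_1_subX_le.
Qed.

Section PrimeNorm.
Variable p : nat.
Hypotheses (p_prime : prime p) (absp_gt0 : 0 < abs p%:R) (absp_lt1 : abs p%:R < 1).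

(* Bezout: 1 = q p - a M, so |1| < 1 if both |p| and |M| were < 1. *)
Lemma absv_natr_coprime M : coprime p M -> ~ abs M%:R < 1.
Proof.
move=> cop hM; have [a _] := Bezoutl M (prime_gt0 p_prime).
rewrite (eqP cop) => /dvdnP[q hq].
have : abs (q%:R * p%:R - a%:R * M%:R) < 1.
  apply: le_lt_trans (absvB_max _ _) _; rewrite gt_max !absvM.
  by rewrite !(le_lt_trans (ler_piMl (absv_ge0 _) (absv_natr_le1 _))).
by rewrite -!natrM -hq natrD addrK absv1 ltxx.
Qed.

Lemma absv_sub1_lt1_pfactor_order zeta :
  is_root_of_unity zeta -> abs (1 - zeta) < 1 ->
  exists2 w, zeta ^+ (p ^ w) = 1 & abs (p ^ w)%:R <= abs (1 - zeta) ^+ (p ^ w).-1.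
Proof.
move=> zeta_unity d_lt1; have zeta1 := absv_unity zeta_unity.
case: zeta_unity => k [k_gt0 zetak]; have [N pz _] := prim_order_exists k_gt0 zetak.
have [M cop NE] := pfactor_coprime p_prime (prim_order_gt0 pz).
pose eta := zeta ^+ (p ^ logn p N).
have : eta ^+ M = 1 by rewrite -exprM mulnC -NE prim_expr_order.
have M_gt0 : (0 < M)%N by move: (prim_order_gt0 pz); rewrite NE muln_gt0 => /andP[].
case/(prim_order_exists M_gt0) => M' peta dvdM'.
have eta1 : abs eta = 1 by rewrite absvX zeta1 expr1n.
have M'1 : M' = 1%N.
  apply/eqP; rewrite eqn_leq (prim_order_gt0 peta) andbT leqNgt; apply/negP => M'gt1.
  apply: (absv_natr_coprime (coprime_dvdr dvdM' cop)).
  apply: le_lt_trans (absv_natr_prim_order peta eta1) _.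
  apply: le_lt_trans (ler_iXnr _ (absv_ge0 _) _) _; first by rewrite -subn1 subn_gt0.
    exact: le_trans (absv_1_subX_le _ zeta1) (ltW d_lt1).
  exact: le_lt_trans (absv_1_subX_le _ zeta1) d_lt1.
have : (N %| p ^ logn p N)%N.
  by rewrite (prim_order_dvd pz) -[_ ^+ _]/eta -[eta]expr1 -M'1 prim_expr_order.
case/(dvdn_pfactor _ _ p_prime) => w _ Nw; exists w; first by rewrite -Nw prim_expr_order.
by rewrite -Nw absv_natr_prim_order.
Qed.

(* Since |1 - ζ|^m <= |p|, the bound of the previous lemma gives
   |p|^w <= |1 - ζ|^(p^w - 1), which fails as soon as p^w - 1 > w m. *)
Lemma unity_near1_order m zeta :
  (0 < m)%N -> is_root_of_unity zeta ->
  abs (zeta - 1) ^+ m <= abs p%:R ->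
  exists2 w, zeta ^+ (p ^ w) = 1 & (p ^ w <= w * m + 1)%N.
Proof.
move=> m_gt0 zeta_unity; rewrite absvBC; set d := abs (1 - zeta) => hm.
have d_lt1 : d < 1.
  rewrite ltNge; apply: contraTN absp_lt1 => d_ge1; rewrite -leNgt.
  exact: le_trans (exprn_ege1 m d_ge1) hm.
have [w zeta_pw hw] := absv_sub1_lt1_pfactor_order zeta_unity d_lt1.
exists w => //; rewrite leqNgt; apply/negP => lt.
have : d ^+ (p ^ w).-1 <= d * (d ^+ m) ^+ w.
  rewrite -exprM mulnC -exprS; apply: ler_wiXn2l; rewrite ?absv_ge0 ?ltW //.
  by rewrite -ltnS prednK ?expn_gt0 ?prime_gt0 // -addn1.
move/(le_trans hw); rewrite natrX absvX; apply/negP; rewrite -ltNge.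
apply: le_lt_trans (_ : d * abs p%:R ^+ w < _); last by rewrite gtr_pMl ?exprn_gt0.
by rewrite ler_wpM2l ?absv_ge0 // lerXn2r ?nnegrE ?exprn_ge0 ?absv_ge0.
Qed.

Lemma card_unity_near1 m (T : seq L) :
  (0 < m)%N -> uniq T ->
  (forall z, z \in T -> is_root_of_unity z /\ abs (z - 1) ^+ m <= abs p%:R) ->
  (size T <= 4 * (m * m) + 2)%N.
Proof.
move=> m_gt0 uT hT; have p_gt1 := prime_gt1 p_prime.
set B := (4 * (m * m) + 2)%N; set W := trunc_log p B.
have pW : (p ^ W <= B)%N by apply: (trunc_logP p_gt1); rewrite /B addn2.
have pW_gt0 : (0 < p ^ W)%N by rewrite expn_gt0 prime_gt0.
have rootsT : all (root ('X^(p ^ W) - 1%:P : {poly L})) T.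
  apply/allP => z /hT[zu hz]; have [w zw hw] := unity_near1_order m_gt0 zu hz.
  have wW : (w <= W)%N by apply: trunc_log_max => //; exact: expn_le_linear_bound hw.
  by rewrite rootE !hornerE -(subnK wW) expnD mulnC exprM zw expr1n subrr.
have nz : ('X^(p ^ W) - 1%:P : {poly L}) != 0 by rewrite -size_poly_eq0 size_XnsubC.
have := max_poly_roots nz rootsT uT; rewrite size_XnsubC // ltnS.
by move/leq_trans; apply.
Qed.

Lemma card_unity_cluster n e a z (T : seq L) :
  (0 < n * e)%N -> a ^+ e = abs p%:R -> uniq T ->
  (forall xi, xi \in T -> is_root_of_unity xi /\ abs (xi - z) ^+ n <= a) ->
  (size T <= 4 * ((n * e) * (n * e)) + 2)%N.
Proof.
move=> ne_gt0 ae uT; case: T uT => [//|xi0 T] uT hT.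
have [xi0_unity xi0_near] := hT xi0 (mem_head _ _).
have xi0_neq0 : xi0 != 0 by rewrite -absv_eq0 absv_unity // oner_eq0.
rewrite -(size_map (fun x => x / xi0)).
apply: (card_unity_near1 ne_gt0).
  by rewrite map_inj_uniq //; apply: mulIf; rewrite invr_eq0.
move=> _ /mapP[xi /hT[xi_unity xi_near] ->]; split; first exact: unity_div.
have -> : xi / xi0 - 1 = (xi - xi0) / xi0 by rewrite mulrBl divff.
rewrite absvM absvV (absv_unity xi0_unity) invr1 mulr1.
have dist_le : abs (xi - xi0) ^+ n <= a.
  have := absvB_max (xi - z) (xi0 - z); rewrite opprB addrA subrK.
  by rewrite le_max => /orP[] /(lerXn2r n) h; apply: le_trans (h _ _) _;
    rewrite ?nnegrE ?absv_ge0.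
have pow_ge0 := exprn_ge0 n (absv_ge0 (xi - xi0)).
by rewrite exprM -ae lerXn2r // nnegrE // (le_trans pow_ge0).
Qed.

End PrimeNorm.

Lemma absv_coef_prod_XsubC (r : seq L) i :
  abs (\prod_(z <- r) ('X - z%:P))`_i <= \prod_(z <- r) Num.max 1 (abs z).
Proof.
elim: r i => [|z r IH] i.
  by rewrite !big_nil coef1; case: (i == 0%N); rewrite ?absv1 ?absv0.
have M_ge0 : 0 <= \prod_(y <- r) Num.max 1 (abs y).
  by apply: prodr_ge0 => y _; rewrite le_max ler01.
rewrite !big_cons mulrBl coefB coefXM coefCM.
apply: le_trans (absvB_max _ _) _; rewrite ge_max; apply/andP; split.
  case: (i == 0%N); first by rewrite absv0 mulr_ge0 // le_max ler01.
  by apply: le_trans (IH _) _; rewrite ler_peMl // le_max lexx.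
by rewrite absvM ler_pM ?absv_ge0 ?IH // le_max lexx orbT.
Qed.

(* Off the unit circle |xi - z| = max 1 |z|, so these factors of |P(xi)|
   cancel against the bound on the coefficients of P. *)
Lemma prod_dist_unit_roots_le (c : L) (r : seq L) (a : R) xi i :
  0 < a -> a^-1 <= abs (c *: \prod_(z <- r) ('X - z%:P))`_i ->
  abs xi = 1 -> abs (c *: \prod_(z <- r) ('X - z%:P)).[xi] = 1 ->
  \prod_(z <- r | abs z == 1) abs (xi - z) <= a.
Proof.
move=> a_gt0 hi xi1 hP.
set Mr := \prod_(z <- r) Num.max 1 (abs z).
set P1 := \prod_(z <- r | abs z == 1) abs (xi - z).
have hcoef : a^-1 <= abs c * Mr.
  by apply: le_trans hi _; rewrite coefZ absvM ler_wpM2l ?absv_ge0 ?absv_coef_prod_XsubC.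
have hval : P1 * (abs c * Mr) = 1.
  rewrite -hP hornerZ horner_prod absvM absv_prod.
  under [X in _ = _ * X]eq_bigr do rewrite hornerXsubC.
  rewrite (bigID (fun z => abs z == 1)) /= -/P1 /Mr (bigID (fun z => abs z == 1)) /=.
  rewrite big1 ?mul1r => [|z /eqP ->]; last by rewrite maxxx.
  rewrite mulrCA; congr (_ * (_ * _)); apply: eq_bigr => z hz.
  by rewrite absvB_eq_max xi1 // eq_sym.
have P1_ge0 : 0 <= P1 by apply: prodr_ge0 => z _; apply: absv_ge0.
have h1 : 1 <= abs c * Mr * a by rewrite -(mulVf (lt0r_neq0 a_gt0)) ler_wpM2r // ltW.
rewrite -[P1]mulr1; apply: le_trans (ler_wpM2l P1_ge0 h1) _.
by rewrite mulrA hval mul1r.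
Qed.

Lemma unity_near_unit_root (c : L) (r : seq L) (a : R) xi i :
  0 < a -> a^-1 <= abs (c *: \prod_(z <- r) ('X - z%:P))`_i ->
  has (fun z => abs z == 1) r -> is_root_of_unity xi ->
  is_root_of_unity (c *: \prod_(z <- r) ('X - z%:P)).[xi] ->
  has (fun z => abs (xi - z) ^+ count (fun z => abs z == 1) r <= a)
      [seq z <- r | abs z == 1].
Proof.
move=> a_gt0 hi; rewrite has_count => n_gt0 xi_unity Pxi_unity.
have := prod_dist_unit_roots_le a_gt0 hi (absv_unity xi_unity) (absv_unity Pxi_unity).
rewrite -big_filter -size_filter; rewrite -size_filter in n_gt0.
have [z zr hz] := exists_pow_size_le_prod (fun z => absv_ge0 (xi - z)) n_gt0.
by move=> h; apply/hasP; exists z => //; apply: le_trans hz h.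
Qed.

Lemma absv_gt1_ge_inv (K : L -> Prop) pi x :
  0 < abs pi -> abs pi < 1 ->
  (forall y, K y -> y != 0 -> exists k : int, abs y = abs pi ^ k) ->
  K x -> 1 < abs x -> (abs pi)^-1 <= abs x.
Proof.
move=> pi_gt0 pi_lt1 value_group Kx x_gt1.
have x_neq0 : x != 0 by apply: contraTneq x_gt1 => ->; rewrite absv0 ltr10.
have [k xk] := value_group x Kx x_neq0; rewrite {}xk in x_gt1 *.
case: k x_gt1 => k x_gt1.
  by move: x_gt1; rewrite /= ltNge exprn_ile1 // ltW.
by rewrite NegzE -exprnN lef_pV2 ?posrE ?exprn_gt0 // ler_iXnr // ltW.
Qed.

End NonarchimedeanAbs.

Theorem mainTheorem11 (R : realType) (L : closedFieldType) (p : nat)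
    (abs : L -> R) (K : L -> Prop) (e : nat) (P : {poly L}) (n : nat) :
  is_Cp abs p ->
  p_adic_field abs K ->
  ramification_index abs p K e ->
  (forall i, K P`_i) ->
  (exists i, 1 < abs P`_i) ->
  (1 <= n)%N ->
  nroots_abs1 abs P n ->
  forall s : seq L, uniq s ->
    (forall xi, xi \in s -> is_root_of_unity xi /\ is_root_of_unity (horner P xi)) ->
    (size s <= 2 ^ 8 * e ^ 8 * p * n ^ 9)%N.
Proof.
move=> [p_prime [habs [_ [absp _]]]] _ [e_gt0 [pi [_ [pi_neq0 [pi_e value_group]]]]].
move=> PK [i Pi_gt1] n_gt0 [c [r [PE count_r]]] s us hs.
have absp_gt0 : 0 < abs p%:R by rewrite absp invr_gt0 ltr0n prime_gt0.
have absp_lt1 : abs p%:R < 1.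
  by rewrite absp invf_lt1 ?ltr0n ?prime_gt0 // ltr1n prime_gt1.
have pi_gt0 : 0 < abs pi by rewrite lt0r absv_eq0 // pi_neq0 absv_ge0.
have pi_lt1 : abs pi < 1 by rewrite -(expr_lt1 e_gt0 (absv_ge0 habs pi)) pi_e.
have Pi_ge := absv_gt1_ge_inv habs pi_gt0 pi_lt1 value_group (PK i) Pi_gt1.
apply: leq_trans (final_bound n_gt0 e_gt0 (prime_gt1 p_prime)).
rewrite -{1}count_r -size_filter.
apply: (size_le_cover (Q := fun xi z => abs (xi - z) ^+ n <= abs pi)).
  move=> xi /hs[xi_unity Pxi_unity]; rewrite PE in Pi_ge Pxi_unity; rewrite -count_r.
  apply: (unity_near_unit_root habs pi_gt0 Pi_ge _ xi_unity Pxi_unity).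
  by rewrite has_count count_r.
move=> z; rewrite -size_filter.
apply: (card_unity_cluster habs p_prime absp_gt0 absp_lt1 (z := z) _ pi_e);
  rewrite ?muln_gt0 ?n_gt0 ?filter_uniq //.
by move=> xi; rewrite mem_filter => /andP[near /hs[xi_unity _]].
Qed.
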